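(* In the construction described in the context, assume Assumption 4.3 holds, and let $\mathcal{K}((\xi,\vec\theta),\cdot)=\sum_{i=1}^n\tilde\omega_i(\xi)P_i((\xi,\vec\theta),\cdot)$ be the kernel of the Mixed Skew Metropolis–Hastings chain with the weights $\tilde\omega_i$ given there. Then for any two states $\xi,\xi'\in\Xi$ and any $i\in\{1,\dots,n\}$ with $i\in\mathcal{A}(\xi)$ and $i\notin\mathcal{A}(\xi')$, we have $P_i((\xi,\vec\theta),(\xi',\vec\theta))=0$ for every $\vec\theta\in\{-1,1\}^n$.
   Context: Let $\Xi$ be a countable set, $\tilde\pi$ a probability measure on $\Xi$ and $\tilde Q$ a Markov kernel on $\Xi$. Assumption 4.3: (i) $\tilde\pi(\xi)>0$ for all $\xi$; (ii) $\tilde Q(\xi,\xi')\ne0$ iff $\tilde Q(\xi',\xi)\ne0$; (iii) the chain generated by $\tilde Q$ is irreducible. State graph $\mathcal{G}=(\mathcal{V},\mathcal{E})$, $\mathcal{V}=\Xi$, $\mathcal{E}=\{(\xi,\xi'):\tilde Q(\xi,\xi')>0\}$. For $i=1,\dots,n$, $\mathcal{G}_i^+=(\mathcal{V}_i,\mathcal{E}_i^+)$ are directed subgraphs of $\mathcal{G}$ without isolated vertices; $\mathcal{E}_i^-=\{(u,v):(v,u)\in\mathcal{E}_i^+\}$, $\mathcal{E}_i=\mathcal{E}_i^+\cup\mathcal{E}_i^-$, with $\mathcal{V}=\bigcup_i\mathcal{V}_i$, $\mathcal{E}=\bigcup_i\mathcal{E}_i$. $\mathcal{N}_i^{\pm}(\xi)=\{\xi':(\xi,\xi')\in\mathcal{E}_i^{\pm}\}$,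 and $\mathcal{N}_i^\theta$ is $\mathcal{N}_i^+$ for $\theta=+1$, $\mathcal{N}_i^-$ for $\theta=-1$. Extended space $\mathcal{X}=\Xi\times\{-1,1\}^n$; $\mathcal{X}_i=\mathcal{V}_i\times\{-1,1\}^n$; $R_i$ flips the sign of the $i$-th component of $\vec\theta$; $S_i(\xi,\vec\theta)=(\xi,R_i(\vec\theta))$. For $(\xi,\vec\theta)\in\mathcal{X}_i$: $Q_i((\xi,\vec\theta),(\xi',\vec\theta'))=\tilde Q(\xi,\xi')/\tilde Q(\xi,\mathcal{N}_i^{\theta_i}(\xi))$ if $\xi'\in\mathcal{N}_i^{\theta_i}(\xi)$, $\vec\theta'=\vec\theta$; $=1$ if $\mathcal{N}_i^{\theta_i}(\xi)=\emptyset$, $\xi'=\xi$, $\vec\theta'=R_i(\vec\theta)$; $=0$ otherwise. Weights $\tilde\omega_i(\xi)=\tilde Q(\xi,\mathcal{N}_i^+(\xi))+\tilde Q(\xi,\mathcal{N}_i^-(\xi))$ (assumed to sum to one over $i$); active set $\mathcal{A}(\xi)=\{i:\tilde\omega_i(\xi)>0\}$. For $x=(\xi,\vec\theta)\in\mathcal{X}_i$, $x'=(\xi',\vec\theta')$: $r_i(x,x')=\frac{\tilde\omega_i(\xi')\tilde\pi(\xi')Q_i((\xi',R_i\vec\theta'),(\xi,R_i\vec\theta))}{\tilde\omega_i(\xi)\tilde\pi(\xi)Q_i((\xi,\vec\theta),(\xi',\vec\theta'))}$ and $P_i(x,x')=Q_i(x,x')\min(1,r_i(x,x'))+\mathbb{1}_{\{S_i(x)\}}(x')[1-\sum_{\tilde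 x}Q_i(x,\tilde x)\min(1,r_i(x,\tilde x))]$. *)

From HB Require Import structures.
From mathcomp Require Import all_boot all_order all_algebra.
From mathcomp Require Import all_classical all_reals all_analysis.
From Stdlib Require Import Relations.
Set Implicit Arguments. Unset Strict Implicit. Unset Printing Implicit Defensive.
Import Order.TTheory GRing.Theory Num.Theory.
Local Open Scope classical_set_scope.
Local Open Scope ring_scope.

Section MSMH.
Variables (R : realType) (T : countType) (n : nat).

(* Extended state: (xi, theta) with theta : {-1,1}^n encoded as bools,
   [true] standing for +1 and [false] for -1. *)
Definition xstate := (T * {ffun 'I_n -> bool})%type.

Definition kmass (Qt : T -> T -> R) (xi : T) (A : set T) : R :=
  fine (\esum_(y in A) (Qt xi y)%:E)%E.

(* N_i^+(xi) (s = true) and N_i^-(xi) (s = false) for the edge set E_i^+ = Ep. *)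
Definition nbhd (Ep : set (T * T)) (s : bool) (xi : T) : set T :=
  if s then [set y | Ep (xi, y)] else [set y | Ep (y, xi)].

Definition omega (Qt : T -> T -> R) (Ep : set (T * T)) (xi : T) : R :=
  kmass Qt xi (nbhd Ep true xi) + kmass Qt xi (nbhd Ep false xi).

Definition activeset (Qt : T -> T -> R) (Ep : 'I_n -> set (T * T)) (xi : T)
  : set 'I_n := [set i | 0 < omega Qt (Ep i) xi].

Definition flip (i : 'I_n) (th : {ffun 'I_n -> bool}) : {ffun 'I_n -> bool} :=
  [ffun j => if j == i then ~~ th j else th j].
Definition Sflip (i : 'I_n) (x : xstate) : xstate := (x.1, flip i x.2).

Definition Qi (Qt : T -> T -> R) (Ep : set (T * T)) (i : 'I_n)
  (x y : xstate) : R :=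
  let N := nbhd Ep (x.2 i) x.1 in
  if (y.2 == x.2) && `[< N y.1 >] then Qt x.1 y.1 / kmass Qt x.1 N
  else if `[< N = set0 >] && (y == Sflip i x) then 1 else 0.

Definition ri (pit : T -> R) (Qt : T -> T -> R) (Ep : set (T * T))
  (i : 'I_n) (x y : xstate) : R :=
  (omega Qt Ep y.1 * pit y.1 * Qi Qt Ep i (y.1, flip i y.2) (x.1, flip i x.2))
  / (omega Qt Ep x.1 * pit x.1 * Qi Qt Ep i x y).

Definition Pi (pit : T -> R) (Qt : T -> T -> R) (Ep : set (T * T))
  (i : 'I_n) (x y : xstate) : R :=
  Qi Qt Ep i x y * Num.min 1 (ri pit Qt Ep i x y)
  + (y == Sflip i x)%:R *
    (1 - fine (\esum_(z in [set: xstate])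
                 (Qi Qt Ep i x z * Num.min 1 (ri pit Qt Ep i x z))%:E)%E).

Definition Kmix (pit : T -> R) (Qt : T -> T -> R) (Ep : 'I_n -> set (T * T))
  (x y : xstate) : R :=
  \sum_(i < n) omega Qt (Ep i) x.1 * Pi pit Qt (Ep i) i x y.

End MSMH.

Definition irreducible (R : realType) (T : Type) (Qt : T -> T -> R) : Prop :=
  forall x y : T, clos_refl_trans T (fun a b => 0 < Qt a b) x y.

From HB Require Import structures.
From mathcomp Require Import all_boot all_order all_algebra.
From mathcomp Require Import all_classical all_reals all_analysis.
Import Order.TTheory GRing.Theory Num.Theory.
Local Open Scope classical_set_scope.
Local Open Scope ring_scope.

(* The weight omega_i(xi') of an inactive target vanishes, and it sits in the
   numerator of the acceptance ratio r_i, so the Metropolis part of P_i is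
   killed; the rejection part only charges S_i(x), which differs from
   (xi', theta) in the i-th direction. *)

Section NonnegativeKernel.
Variables (R : realType) (T : countType) (n : nat) (Qt : T -> T -> R).
Hypothesis Qt_ge0 : forall x y, 0 <= Qt x y.

Lemma kmass_ge0 (x : T) (A : set T) : 0 <= kmass Qt x A.
Proof. by apply: fine_ge0; apply: esum_ge0 => y _; rewrite lee_fin. Qed.

Lemma omega_ge0 (Ep : set (T * T)) (x : T) : 0 <= omega Qt Ep x.
Proof. by rewrite addr_ge0 ?kmass_ge0. Qed.

Lemma omega_eq0_notin_activeset (Ep : 'I_n -> set (T * T)) (x : T) (i : 'I_n) :
  ~ activeset Qt Ep x i -> omega Qt (Ep i) x = 0.
Proof.
move=> x_inactive; apply/eqP; rewrite eq_le omega_ge0 andbT leNgt.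
by apply/negP => omega_gt0; apply: x_inactive.
Qed.

End NonnegativeKernel.

Lemma flip_neq {n : nat} (i : 'I_n) (th : {ffun 'I_n -> bool}) : flip i th != th.
Proof. by apply/negP => /eqP/ffunP/(_ i); rewrite ffunE eqxx; case: (th i). Qed.

Lemma neq_Sflip_same_direction (T : countType) (n : nat) (i : 'I_n)
    (x y : xstate T n) :
  y.2 = x.2 -> y != Sflip i x.
Proof.
case: x y => [xi th] [xi' th'] /= ->.
by apply/negP => /eqP[_] /eqP; rewrite eq_sym (negbTE (flip_neq i th)).
Qed.

Lemma ri_eq0_target_weight0 (R : realType) (T : countType) (n : nat)
    (pit : T -> R) (Qt : T -> T -> R) (Ep : set (T * T)) (i : 'I_n)
    (x y : xstate T n) :
  omega Qt Ep y.1 = 0 -> ri pit Qt Ep i x y = 0.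
Proof. by rewrite /ri => ->; rewrite !mul0r. Qed.

Lemma Pi_eq0_target_weight0 (R : realType) (T : countType) (n : nat)
    (pit : T -> R) (Qt : T -> T -> R) (Ep : set (T * T)) (i : 'I_n)
    (x y : xstate T n) :
  omega Qt Ep y.1 = 0 -> y != Sflip i x -> Pi pit Qt Ep i x y = 0.
Proof.
move=> omega_y0 /negbTE y_neq_Sx.
by rewrite /Pi y_neq_Sx mul0r addr0 ri_eq0_target_weight0 // (min_r ler01) mulr0.
Qed.

Theorem lemmaB3 (R : realType) (T : countType) (n : nat)
  (pit : T -> R) (Qt : T -> T -> R)
  (V : 'I_n -> set T) (Ep : 'I_n -> set (T * T))
  (* tilde pi is a probability measure on Xi *)
  (hpi0 : forall x, 0 <= pit x)
  (hpi1 : (\esum_(x in [set: T]) (pit x)%:E = 1)%E)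
  (* tilde Q is a Markov kernel on Xi *)
  (hQ0 : forall x y, 0 <= Qt x y)
  (hQ1 : forall x, (\esum_(y in [set: T]) (Qt x y)%:E = 1)%E)
  (* Assumption 4.3 *)
  (hA1 : forall x, 0 < pit x)
  (hA2 : forall x y, Qt x y != 0 <-> Qt y x != 0)
  (hA3 : irreducible Qt)
  (* G_i^+ = (V_i, E_i^+) are directed subgraphs of G without isolated vertices *)
  (hsubE : forall i e, Ep i e -> 0 < Qt e.1 e.2)
  (hsubV : forall i e, Ep i e -> V i e.1 /\ V i e.2)
  (hiso : forall i v, V i v -> exists u, Ep i (v, u) \/ Ep i (u, v))
  (hcovV : \bigcup_(i in [set: 'I_n]) V i = [set: T])
  (hcovE : forall e : T * T, 0 < Qt e.1 e.2 ->
             exists i, Ep i e \/ Ep i (e.2, e.1))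
  (* the weights sum to one *)
  (hw : forall x, \sum_(i < n) omega Qt (Ep i) x = 1) :
  forall (xi xi' : T) (i : 'I_n),
    activeset Qt Ep xi i -> ~ activeset Qt Ep xi' i ->
    forall th : {ffun 'I_n -> bool},
      Pi pit Qt (Ep i) i (xi, th) (xi', th) = 0.
Proof.
move=> xi xi' i _ xi'_inactive th.
apply: Pi_eq0_target_weight0.
- exact: omega_eq0_notin_activeset.
- exact: neq_Sflip_same_direction.
Qed.
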